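(* Let $f:\mathbb{R}^n\to\mathbb{R}$ be twice continuously differentiable with Lipschitz continuous Hessian $\nabla^2 f$, let $x\in\mathbb{R}^n$ with $\nabla^2 f(x)$ invertible, and let $y^1,\dots,y^p\in\mathbb{R}^n$ with $p\ge n$. Set $z^\ell=\nabla^2 f(x)(y^\ell-x)$, $\Delta_y=\max_{1\le\ell\le p}\|y^\ell-x\|$, $\Delta_z=\max_{1\le\ell\le p}\|z^\ell\|$, and let $M_L^z$ be the $p\times n$ matrix with rows $(1/\Delta_z)(z^\ell)^\top$, $\ell=1,\dots,p$. Suppose $M_L^z$ has full column rank, and let $\Lambda_z$ be a bound on the norm of the left inverse of $M_L^z$. If $d^N\in\mathbb{R}^n$ satisfies $$(z^\ell)^\top d^N=-f(y^\ell)+f(x)+\tfrac12 (y^\ell-x)^\top z^\ell,\qquad \ell=1,\dots,p,$$ (in the least-squares sense when $p>n$), then $$\left\|-\nabla^2 f(x)^{-1}\nabla f(x)-d^N\right\|\le \Lambda_z\,\mathcal{O}\!\left(\frac{\Delta_y^3}{\Delta_z}\right),$$ where the multiplicative constant in $\mathcal{O}$ depends on the Lipschitz constant of $\nabla^2 f$.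
   Context: $\mathcal{O}(A)$ denotes a constant times $A$, where the constant is independent of $A$. Norms are Euclidean. *)

From HB Require Import structures.
From mathcomp Require Import all_boot all_order all_algebra.
From mathcomp Require Import all_classical all_reals all_analysis.
Set Implicit Arguments. Unset Strict Implicit. Unset Printing Implicit Defensive.
Import Order.TTheory GRing.Theory Num.Theory.
Import numFieldNormedType.Exports.
Local Open Scope ring_scope.

Section Defs.
Variable R : realType.

Definition dotv (k : nat) (u v : 'cV[R]_k) : R := (u^T *m v) 0 0.
Definition enorm (k : nat) (v : 'cV[R]_k) : R := Num.sqrt (\sum_i (v i 0) ^+ 2).

Definition grad (n : nat) (f : 'cV[R]_n -> R) (x : 'cV[R]_n) : 'cV[R]_n :=
  \col_i ('d f x (delta_mx i 0)).

(* Hessian: Frechet derivative of the gradient; entry (i,j) = d_j d_i f *)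
Definition hessian (n : nat) (f : 'cV[R]_n -> R) (x : 'cV[R]_n) : 'M[R]_n :=
  \matrix_(i, j) ('d (grad f) x (delta_mx j 0)) i 0.

Definition C2 (n : nat) (f : 'cV[R]_n -> R) : Prop :=
  (forall x, differentiable f x) /\ (forall x, differentiable (grad f) x) /\
  continuous (hessian f).

Definition hessian_lipschitz (n : nat) (f : 'cV[R]_n -> R) (L : R) : Prop :=
  forall x y (v : 'cV[R]_n),
    enorm ((hessian f x - hessian f y) *m v) <= L * enorm (x - y) * enorm v.

Definition maxnorm (p : nat) (a : 'I_p -> R) : R := \big[Num.max/0]_(l < p) a l.

(* the (Moore-Penrose) left inverse of a full column rank matrix *)
Definition left_inv (p n : nat) (M : 'M[R]_(p, n)) : 'M[R]_(n, p) :=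
  invmx (M^T *m M) *m M^T.
End Defs.

(* Let s = - (hess f x)^-1 (grad f x) be the exact Newton step. The Hessian is
   symmetric, so z_l' s = - (y_l - x)' (grad f x), and the l-th residual of s in
   the interpolation system is the Taylor remainder of order three of f at x in
   the direction y_l - x, which is O(|y_l - x|^3) when the Hessian is Lipschitz.
   The residual map d |-> (z_l' d - b_l)_l is affine with linear part Dz M, and a
   least-squares solution dN satisfies the normal equations M' r(dN) = 0, so
   applying the left inverse of M gives s - dN = Dz^-1 M^+ r(s), whence the bound.
   The Hessian is defined as the derivative of the gradient, so its symmetry is
   not free: it follows from the Lipschitz condition, because the second
   difference f(x+u+v) - f(x+u) - f(x+v) + f(x) is symmetric in u and v and equals
   v' (hess f x) u up to O(max(|u|, |v|)^3). *)

From HB Require Import structures.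
From mathcomp Require Import all_boot all_order all_algebra.
From mathcomp Require Import all_classical all_reals all_analysis.
From mathcomp Require Import ring lra.
Import Order.TTheory GRing.Theory Num.Theory.
Import numFieldNormedType.Exports.
Set Implicit Arguments. Unset Strict Implicit. Unset Printing Implicit Defensive.
Local Open Scope ring_scope.

Section RealFacts.
Variable R : realType.

Lemma le_quadratic_eq0 (a c : R) :
  0 <= c -> (forall t, 2 * t * a <= t ^+ 2 * c) -> a = 0.
Proof.
move=> c_ge0 quad_ge; have c1_gt0 : 0 < c + 1 by rewrite ltr_wpDl.
have := quad_ge (a / (c + 1)); rewrite -subr_ge0.
have -> : (a / (c + 1)) ^+ 2 * c - 2 * (a / (c + 1)) * a
          = - (a ^+ 2 * (c + 2)) / (c + 1) ^+ 2.
  by field; rewrite gt_eqF.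
rewrite pmulr_lge0 ?invr_gt0 ?exprn_gt0 // oppr_ge0 pmulr_lle0; last first.
  by rewrite ltr_wpDl.
by rewrite le_eqVlt ltNge sqr_ge0 orbF sqrf_eq0 => /eqP.
Qed.

Lemma normr_le_linear_eq0 (a C : R) :
  (forall t, 0 < t -> `|a| <= C * t) -> a = 0.
Proof.
move=> a_small; apply/normr0_eq0/le_anti; rewrite normr_ge0 andbT.
apply/ler_addgt0Pr => e e_gt0; rewrite add0r.
have K_gt0 : 0 < `|C| + 1 by rewrite ltr_wpDl.
have eK_gt0 : 0 < e / (`|C| + 1) by rewrite divr_gt0.
apply: le_trans (a_small _ eK_gt0) _.
apply: le_trans (_ : (`|C| + 1) * (e / (`|C| + 1)) <= _).
  apply: ler_wpM2r; first exact: ltW.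
  by apply: le_trans (ler_norm C) _; rewrite lerDl.
by rewrite mulrC divfK ?gt_eqF.
Qed.

Lemma MVT01 (g dg : R -> R) : (forall t : R, is_derive t (1 : R) g (dg t)) ->
  exists2 c, 0 <= c <= 1 & g 1 - g 0 = dg c.
Proof.
move=> g'; have g_cont : {within `[0, 1], continuous g}%classic.
  by apply: derivable_within_continuous => t _; apply: ex_derive; exact: g'.
have [c c01 ->] := MVT_segment ler01 (fun t _ => g' t) g_cont.
by exists c; [move: c01; rewrite in_itv | rewrite subr0 mulr1].
Qed.

Lemma is_derive_quadratic (a b t : R) :
  is_derive t 1 (fun u : R => u * a + u ^+ 2 / 2 * b) (a + t * b).
Proof.
have id' := is_derive_id t (1 : R).
have h := is_deriveD (is_deriveM id' (is_derive_cst a t 1))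
                     (is_deriveM (is_deriveX 2 id') (is_derive_cst (2^-1 * b) t 1)).
have -> : (fun u : R => u * a + u ^+ 2 / 2 * b) =
          id * cst a + id ^+ 2 * cst (2^-1 * b).
  by apply/funext => u; rewrite exprfctE /= mulrA.
apply: is_derive_eq h _.
rewrite exprfctE /= !scaler0 !add0r expr1 /GRing.scale /= !mulr1.
by field.
Qed.

End RealFacts.

Section Euclidean.
Variables (R : realType) (k : nat).
Implicit Types (u v w : 'cV[R]_k).

Lemma dotvE u v : dotv u v = \sum_i u i 0 * v i 0.
Proof. by rewrite /dotv mxE; apply: eq_bigr => i _; rewrite mxE. Qed.

Lemma dotvC u v : dotv u v = dotv v u.
Proof. by rewrite !dotvE; apply: eq_bigr => i _; rewrite mulrC. Qed.

Lemma dotvBl u w v : dotv (u - w) v = dotv u v - dotv w v.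
Proof. by rewrite !dotvE -sumrB; apply: eq_bigr => i _; rewrite !mxE mulrBl. Qed.

Lemma dotvBr u v w : dotv u (v - w) = dotv u v - dotv u w.
Proof. by rewrite dotvC dotvBl !(dotvC u). Qed.

Lemma dotvZl (a : R) u v : dotv (a *: u) v = a * dotv u v.
Proof. by rewrite !dotvE mulr_sumr; apply: eq_bigr => i _; rewrite mxE mulrA. Qed.

Lemma dotvNl u v : dotv (- u) v = - dotv u v.
Proof. by rewrite -scaleN1r dotvZl mulN1r. Qed.

Lemma dotv_mulmxl m (A : 'M[R]_(m, k)) (u : 'cV[R]_m) v :
  dotv u (A *m v) = dotv (A^T *m u) v.
Proof. by rewrite /dotv trmx_mul trmxK mulmxA. Qed.

Lemma dotv_delta (i : 'I_k) v : dotv (delta_mx i 0) v = v i 0.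
Proof.
rewrite dotvE (bigD1 i) //= big1 => [|j /negPf ji]; last by rewrite mxE ji mul0r.
by rewrite mxE !eqxx mul1r addr0.
Qed.

Lemma enorm_ge0 v : 0 <= enorm v.
Proof. exact: sqrtr_ge0. Qed.

Lemma enorm_sqr v : enorm v ^+ 2 = dotv v v.
Proof.
rewrite dotvE sqr_sqrtr; last by apply: sumr_ge0 => i _; exact: sqr_ge0.
by apply: eq_bigr => i _; rewrite expr2.
Qed.

Lemma enorm_eq0 v : (enorm v == 0) = (v == 0).
Proof.
have sq_ge0 i : 0 <= v i 0 ^+ 2 by exact: sqr_ge0.
apply/idP/eqP => [|->]; last first.
  by rewrite /enorm big1 ?sqrtr0 // => i _; rewrite mxE expr0n.
rewrite sqrtr_eq0 => sum_le0.
have : \sum_i v i 0 ^+ 2 == 0 by rewrite eq_le sum_le0 sumr_ge0.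
rewrite psumr_eq0 // => /allP v0; apply/matrixP => i j; rewrite (ord1 j) mxE.
by apply/eqP; rewrite -sqrf_eq0; apply: v0; exact: mem_index_enum.
Qed.

Lemma enorm0 : enorm (0 : 'cV[R]_k) = 0.
Proof. by apply/eqP; rewrite enorm_eq0. Qed.

Lemma enormZ (a : R) v : enorm (a *: v) = `|a| * enorm v.
Proof.
rewrite /enorm (eq_bigr (fun i => a ^+ 2 * v i 0 ^+ 2)); last first.
  by move=> i _; rewrite mxE exprMn.
by rewrite -mulr_sumr sqrtrM ?sqr_ge0 // sqrtr_sqr.
Qed.

Lemma enorm_delta (i : 'I_k) : enorm (delta_mx i 0 : 'cV[R]_k) = 1.
Proof.
rewrite /enorm (bigD1 i) //= big1 ?addr0; last first.
  by move=> j /negPf ji; rewrite mxE ji /= expr0n.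
by rewrite mxE !eqxx /= expr1n sqrtr1.
Qed.

Lemma enorm_sqrB u v :
  enorm (u - v) ^+ 2 = enorm u ^+ 2 - 2 * dotv u v + enorm v ^+ 2.
Proof.
rewrite !enorm_sqr !dotvBl ![dotv _ (u - v)]dotvC !dotvBl (dotvC v u).
by rewrite mulr2n mulrDl mul1r; ring.
Qed.

Lemma normr_coord_le_enorm v i : `|v i 0| <= enorm v.
Proof.
rewrite /enorm -sqrtr_sqr; apply: ler_wsqrtr.
by rewrite (bigD1 i) //= lerDl; apply: sumr_ge0 => ? _; exact: sqr_ge0.
Qed.

Lemma enorm_le_sum v : enorm v <= \sum_i `|v i 0|.
Proof.
rewrite /enorm -[X in _ <= X]ger0_norm ?sumr_ge0 // -sqrtr_sqr.
apply: ler_wsqrtr; rewrite expr2 mulr_suml; apply: ler_sum => i _.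
rewrite -[v i 0 ^+ 2]ger0_norm ?sqr_ge0 // expr2 normrM; apply: ler_wpM2l => //.
by rewrite (bigD1 i) //= lerDl sumr_ge0.
Qed.

Lemma enorm_le_coord_bound v (a : R) :
  (forall i, `|v i 0| <= a) -> enorm v <= k%:R * a.
Proof.
move=> va; apply: (le_trans (enorm_le_sum v)).
by rewrite mulr_natl -[X in _ *+ X]card_ord -sumr_const; apply: ler_sum.
Qed.

(* A crude Cauchy-Schwarz inequality; the constants are immaterial here. *)
Lemma normr_dotv_le u v : `|dotv u v| <= k%:R * (enorm u * enorm v).
Proof.
rewrite dotvE; apply: (le_trans (ler_norm_sum _ _ _)).
rewrite mulr_natl -[X in _ *+ X]card_ord -sumr_const; apply: ler_sum => i _.
by rewrite normrM ler_pM ?normr_coord_le_enorm.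
Qed.

End Euclidean.

Lemma operator_bound_ge0 (R : realType) m k (A : 'M[R]_(m, k)) (c : R) (i : 'I_k) :
  (forall v, enorm (A *m v) <= c * enorm v) -> 0 <= c.
Proof.
move=> A_le; apply: le_trans (enorm_ge0 (A *m delta_mx i 0)) _.
by rewrite -[c]mulr1 -(enorm_delta R i).
Qed.

Section LeastSquares.
Variables (R : realType) (p n : nat).

Lemma mulmx_trmx_eq0 m k (X : 'M[R]_(m, k)) : X *m X^T = 0 -> X = 0.
Proof.
move=> XXt0; apply/matrixP => i j.
have := congr1 (fun A : 'M[R]_m => A i i) XXt0.
rewrite [LHS]mxE [RHS]mxE => /eqP; rewrite psumr_eq0; last first.
  by move=> l _; rewrite mxE -expr2 sqr_ge0.
move=> /allP /(_ j (mem_index_enum _)); rewrite mxE -expr2 sqrf_eq0 => /eqP ->.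
by rewrite mxE.
Qed.

Lemma trmx_mulmx_unit (M : 'M[R]_(p, n)) : \rank M = n -> M^T *m M \in unitmx.
Proof.
move=> rankM; rewrite -row_free_unit -kermx_eq0.
set K := kermx (M^T *m M).
have : (K *m M^T) *m (K *m M^T)^T = 0.
  by rewrite trmx_mul trmxK !mulmxA -(mulmxA _ M^T M) mulmx_ker mul0mx.
move=> /mulmx_trmx_eq0 /eqP; rewrite mulmx_free_eq0 //.
by rewrite /row_free mxrank_tr rankM.
Qed.

Lemma left_inv_mulmx (M : 'M[R]_(p, n)) : \rank M = n -> left_inv M *m M = 1%:M.
Proof. by move=> rankM; rewrite /left_inv -mulmxA mulVmx ?trmx_mulmx_unit. Qed.

Definition is_lsq_solution (A : 'M[R]_(p, n)) (c : 'cV[R]_p) (d0 : 'cV[R]_n) :=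
  forall d, enorm (A *m d0 - c) <= enorm (A *m d - c).

Lemma lsq_normal_eq A c d0 :
  is_lsq_solution A c d0 -> A^T *m (A *m d0 - c) = 0.
Proof.
move=> d0_min; set r := A *m d0 - c; set w := A^T *m r.
suff : enorm w ^+ 2 = 0 by move/eqP; rewrite sqrf_eq0 enorm_eq0 => /eqP.
apply: (le_quadratic_eq0 (c := enorm (A *m w) ^+ 2)); first exact: sqr_ge0.
move=> t; have := d0_min (d0 - t *: w).
have -> : A *m (d0 - t *: w) - c = r - t *: (A *m w).
  by rewrite mulmxBr -scalemxAr addrAC.
rewrite -ler_sqr ?nnegrE ?enorm_ge0 // [X in _ <= X]enorm_sqrB enormZ.
rewrite exprMn real_normK ?num_real // dotvC dotvZl dotvC dotv_mulmxl -enorm_sqr.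
by rewrite -/r -/w; lra.
Qed.

Lemma lsq_error A c d0 d : \rank A = n -> is_lsq_solution A c d0 ->
  d - d0 = left_inv A *m (A *m d - c).
Proof.
move=> rankA d0_min.
have -> : A *m d - c = A *m (d - d0) + (A *m d0 - c).
  by rewrite mulmxBr addrA subrK.
rewrite mulmxDr mulmxA left_inv_mulmx // mul1mx.
by rewrite /left_inv -mulmxA lsq_normal_eq // mulmx0 addr0.
Qed.

Lemma lsq_solution_exact A c d0 : A *m d0 = c -> is_lsq_solution A c d0.
Proof. by move=> <- d; rewrite subrr enorm0 enorm_ge0. Qed.

Lemma lsq_error_le (Z : 'M[R]_(p, n)) c (D Lam : R) d0 d : 0 < D ->
  \rank (D^-1 *: Z) = n ->
  (forall v, enorm (left_inv (D^-1 *: Z) *m v) <= Lam * enorm v) ->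
  is_lsq_solution Z c d0 -> enorm (d - d0) <= Lam * (enorm (Z *m d - c) / D).
Proof.
move=> D_gt0 rankDZ Lam_bound d0_min.
have scaleE d' : (D^-1 *: Z) *m d' - D^-1 *: c = D^-1 *: (Z *m d' - c).
  by rewrite -scalemxAl scalerBr.
have d0_min' : is_lsq_solution (D^-1 *: Z) (D^-1 *: c) d0.
  by move=> d'; rewrite !scaleE !enormZ ler_wpM2l.
rewrite (lsq_error d rankDZ d0_min') scaleE.
apply: le_trans (Lam_bound _) _.
by rewrite enormZ ger0_norm ?invr_ge0 ?(ltW D_gt0) // [D^-1 * _]mulrC.
Qed.

End LeastSquares.

Section DirectionalDerivatives.
Variables (R : realType) (n : nat).
Implicit Types (y s : 'cV[R]_n).

Lemma is_derive_line (W : normedModType R) (F : 'cV[R]_n -> W) y s t :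
  differentiable F (t *: s + y) ->
  is_derive t 1 (fun u : R => F (u *: s + y)) ('d F (t *: s + y) s).
Proof.
move=> dF.
have line_diff : is_diff t (fun u : R => u *: s + y) (( *:%R ^~ s) + 0).
  have -> : (fun u : R => u *: s + y) = ( *:%R ^~ s) + cst y by [].
  exact: is_diffD.
have dFl : differentiable (F \o (fun u : R => u *: s + y)) t.
  exact: differentiable_comp.
apply: is_derive_eq; first exact/derivableP/diff_derivable.
by rewrite deriveE // diff_comp //= diff_val /= !fctE scale1r addr0.
Qed.

Lemma diff_sum_delta (W : normedModType R) (F : 'cV[R]_n -> W) y s :
  'd F y s = \sum_i s i 0 *: 'd F y (delta_mx i 0).
Proof.
rewrite {1}(matrix_sum_delta s) linear_sum; apply: eq_bigr => i _.
by rewrite big_ord1 linearZ.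
Qed.

Lemma diff_gradE (f : 'cV[R]_n -> R) y s : 'd f y s = dotv (grad f y) s.
Proof. by rewrite diff_sum_delta dotvE; apply: eq_bigr => i _; rewrite mxE mulrC. Qed.

Lemma diff_grad_hessian (f : 'cV[R]_n -> R) y s :
  'd (grad f) y s = hessian f y *m s.
Proof.
rewrite diff_sum_delta; apply/matrixP => i j; rewrite (ord1 j) summxE !mxE.
by apply: eq_bigr => k _; rewrite !mxE mulrC.
Qed.

Lemma diff_coord m k (M : 'M[R]_(m, k)) i j :
  'd (fun N : 'M[R]_(m, k) => N i j) M = (fun N => N i j) :> (_ -> R).
Proof.
have coord_linear : linear (fun N : 'M[R]_(m, k) => N i j : R).
  by move=> a u v; rewrite !mxE.
pose coord : {linear 'M[R]_(m, k) -> R} :=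
  HB.pack (fun N : 'M[R]_(m, k) => N i j : R)
    (GRing.isLinear.Build _ _ _ _ _ coord_linear).
by rewrite (_ : (fun _ => _) = coord) //; apply: diff_lin; exact: coord_continuous.
Qed.

Lemma is_derive_line_grad (f : 'cV[R]_n -> R) y s j t :
  differentiable (grad f) (t *: s + y) ->
  is_derive t 1 (fun u => grad f (u *: s + y) j 0)
    ((hessian f (t *: s + y) *m s) j 0).
Proof.
move=> dgrad.
have dcoord := differentiable_coord (grad f (t *: s + y)) j 0.
have -> : (hessian f (t *: s + y) *m s) j 0 =
          'd ((fun N : 'cV[R]_n => N j 0) \o grad f) (t *: s + y) s.
  by rewrite diff_comp // diff_coord -diff_grad_hessian.
exact/(is_derive_line (F := (fun N : 'cV[R]_n => N j 0) \o grad f))/differentiable_comp.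
Qed.

End DirectionalDerivatives.

Section LipschitzHessian.
Variables (R : realType) (n : nat) (f : 'cV[R]_n -> R) (L : R).
Hypotheses (f_diff : forall x, differentiable f x)
  (grad_diff : forall x, differentiable (grad f) x)
  (hessian_lip : hessian_lipschitz f L).
Implicit Types (x y s u v : 'cV[R]_n).

Lemma enorm_hessianB_le x y v :
  enorm ((hessian f x - hessian f y) *m v) <= `|L| * enorm (x - y) * enorm v.
Proof.
apply: le_trans (hessian_lip x y v) _.
by rewrite ler_wpM2r ?enorm_ge0 // ler_wpM2r ?enorm_ge0 // ler_norm.
Qed.

Lemma normr_grad_taylor1 y s j :
  `|grad f (s + y) j 0 - grad f y j 0 - (hessian f y *m s) j 0|
    <= `|L| * enorm s ^+ 2.
Proof.
have [c /andP[c_ge0 c_le1]] :=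
  MVT01 (fun t => is_derive_line_grad j (grad_diff (t *: s + y))).
rewrite scale1r scale0r add0r => ->.
have -> : (hessian f (c *: s + y) *m s) j 0 - (hessian f y *m s) j 0 =
          ((hessian f (c *: s + y) - hessian f y) *m s) j 0.
  by move: (hessian f _) (hessian f y) => H1 H0; rewrite mulmxBl !mxE.
apply: le_trans (normr_coord_le_enorm _ j) _.
apply: le_trans (enorm_hessianB_le _ _ _) _.
rewrite addrK enormZ (ger0_norm c_ge0) expr2 [in X in _ <= X]mulrA.
apply: ler_wpM2r; first exact: enorm_ge0.
by apply: ler_wpM2l => //; exact: ler_piMl (enorm_ge0 _) c_le1.
Qed.

Lemma enorm_grad_taylor1 y s :
  enorm (grad f (s + y) - grad f y - hessian f y *m s)
    <= n%:R * (`|L| * enorm s ^+ 2).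
Proof.
apply: enorm_le_coord_bound => j.
have -> : (grad f (s + y) - grad f y - hessian f y *m s) j 0 =
          grad f (s + y) j 0 - grad f y j 0 - (hessian f y *m s) j 0.
  by move: (grad f _) (grad f y) (hessian f y *m s) => g1 g0 h; rewrite !mxE.
exact: normr_grad_taylor1.
Qed.

Lemma normr_dotv_grad_taylor1 y s v :
  `|dotv (grad f (s + y) - grad f y - hessian f y *m s) v|
    <= n%:R ^+ 2 * `|L| * (enorm s ^+ 2 * enorm v).
Proof.
apply: le_trans (normr_dotv_le _ _) _.
rewrite [X in _ <= X](_ : _ = n%:R * (n%:R * (`|L| * enorm s ^+ 2) * enorm v));
  last by ring.
apply: ler_wpM2l => //; apply: ler_wpM2r; [exact: enorm_ge0 | exact: enorm_grad_taylor1].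
Qed.

Lemma normr_dotv_hessianB_le x y v :
  `|dotv v ((hessian f x - hessian f y) *m v)|
    <= n%:R * `|L| * (enorm (x - y) * enorm v ^+ 2).
Proof.
apply: le_trans (normr_dotv_le _ _) _.
rewrite [X in _ <= X](_ : _ = n%:R * (enorm v * (`|L| * enorm (x - y) * enorm v)));
  last by ring.
apply: ler_wpM2l => //; apply: ler_wpM2l; [exact: enorm_ge0 | exact: enorm_hessianB_le].
Qed.

Lemma normr_taylor2 y s :
  `|f (s + y) - f y - dotv (grad f y) s - 2^-1 * dotv s (hessian f y *m s)|
    <= n%:R ^+ 2 * `|L| * enorm s ^+ 3.
Proof.
set a := dotv (grad f y) s; set h := dotv s (hessian f y *m s).
pose e t := grad f (t *: s + y) - grad f y - hessian f y *m (t *: s).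
have psi' (t : R) : is_derive t (1 : R)
    (fun u : R => f (u *: s + y) - (u * a + u ^+ 2 / 2 * h)) (dotv (e t) s).
  apply: is_derive_eq.
    exact: is_deriveB (is_derive_line (f_diff (t *: s + y))) (is_derive_quadratic a h t).
  rewrite diff_gradE /e !dotvBl -scalemxAr dotvZl (dotvC (hessian f y *m s)).
  by rewrite opprD addrA.
have [c /andP[c_ge0 c_le1]] := MVT01 psi'.
rewrite scale1r scale0r add0r => psi_mvt.
have -> : f (s + y) - f y - a - 2^-1 * h =
          f (s + y) - (1 * a + 1 ^+ 2 / 2 * h) - (f y - (0 * a + 0 ^+ 2 / 2 * h)).
  by ring.
rewrite psi_mvt; apply: le_trans (normr_dotv_grad_taylor1 y (c *: s) s) _.
apply: ler_wpM2l => //; rewrite enormZ (ger0_norm c_ge0) exprMn -mulrA -exprSr.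
by apply: ler_piMl; rewrite ?exprn_ge0 ?enorm_ge0 ?expr_le1.
Qed.

Lemma second_difference_hessian x u v :
  `|f (v + (u + x)) - f (u + x) - f (v + x) + f x - dotv (hessian f x *m u) v|
    <= 2 * (n%:R ^+ 2 * `|L| * enorm v ^+ 3)
       + n%:R ^+ 2 * `|L| * (enorm u ^+ 2 * enorm v)
       + 2^-1 * (n%:R * `|L| * (enorm u * enorm v ^+ 2)).
Proof.
have taylor_ux := normr_taylor2 (u + x) v; have taylor_x := normr_taylor2 x v.
have grad_le := normr_dotv_grad_taylor1 x u v.
have hessian_le := normr_dotv_hessianB_le (u + x) x v.
rewrite !dotvBl in grad_le; rewrite addrK mulmxBl dotvBr in hessian_le.
move: taylor_ux taylor_x grad_le hessian_le; move: (grad f) (hessian f) => g H.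
have -> : f (v + (u + x)) - f (u + x) - f (v + x) + f x - dotv (H x *m u) v
  = (f (v + (u + x)) - f (u + x) - dotv (g (u + x)) v - 2^-1 * dotv v (H (u + x) *m v))
    - (f (v + x) - f x - dotv (g x) v - 2^-1 * dotv v (H x *m v))
    + (dotv (g (u + x)) v - dotv (g x) v - dotv (H x *m u) v)
    + 2^-1 * (dotv v (H (u + x) *m v) - dotv v (H x *m v)) by ring.
move=> taylor_ux taylor_x grad_le hessian_le.
apply: le_trans (ler_normD _ _) _; apply: lerD; last first.
  by rewrite normrM ger0_norm // ler_wpM2l.
apply: le_trans (ler_normD _ _) _; apply: lerD => //.
by rewrite mulr_natl mulr2n; apply: le_trans (ler_normB _ _) _; apply: lerD.
Qed.

Lemma hessian_sym x : (hessian f x)^T = hessian f x.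
Proof.
apply/matrixP => i j; rewrite mxE; apply/eqP; rewrite -subr_eq0; apply/eqP.
apply: (normr_le_linear_eq0 (C := (6 * n%:R ^+ 2 + n%:R) * `|L|)) => t t_gt0.
pose e k : 'cV[R]_n := t *: delta_mx k 0.
have e_norm k : enorm (e k) = t by rewrite enormZ enorm_delta mulr1 gtr0_norm.
have e_dot k l : dotv (hessian f x *m e k) (e l) = t ^+ 2 * hessian f x l k.
  move: (hessian f x) => H.
  by rewrite -scalemxAr dotvZl dotvC dotvZl dotv_delta -colE mxE mulrA -expr2.
set B := 2 * (n%:R ^+ 2 * `|L| * t ^+ 3) + n%:R ^+ 2 * `|L| * (t ^+ 2 * t)
         + 2^-1 * (n%:R * `|L| * (t * t ^+ 2)).
have := second_difference_hessian x (e i) (e j).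
have := second_difference_hessian x (e j) (e i).
(* Both second differences are the same number, hence the symmetry. *)
rewrite !e_dot !e_norm -/B (addrCA (e i)).
move: (f _) (f (e i + x)) (f (e j + x)) (f x) (hessian f x i j) (hessian f x j i).
move=> fij fi fj fx hij hji sym_ij sym_ji.
have t2_gt0 : 0 < t ^+ 2 by rewrite exprn_gt0.
rewrite -(ler_pM2l t2_gt0) -[X in X * _](gtr0_norm t2_gt0) -normrM.
have -> : t ^+ 2 * (hji - hij) = (fij - fj - fi + fx - t ^+ 2 * hij)
                                 - (fij - fi - fj + fx - t ^+ 2 * hji) by ring.
rewrite [X in _ <= X](_ : _ = B + B); last by rewrite /B; field.
by apply: le_trans (ler_normB _ _) _; apply: lerD.
Qed.

Lemma newton_step_residual x y : hessian f x \in unitmx ->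
  `|dotv (hessian f x *m (y - x)) (- (invmx (hessian f x) *m grad f x))
    - (- f y + f x + 2^-1 * dotv (y - x) (hessian f x *m (y - x)))|
  <= n%:R ^+ 2 * `|L| * enorm (y - x) ^+ 3.
Proof.
move=> H_unit.
rewrite dotvC dotv_mulmxl hessian_sym mulmxN mulmxA mulmxV // mul1mx dotvNl.
have := normr_taylor2 x (y - x); rewrite subrK.
move: (f y) (f x) (grad f x) (hessian f x) (y - x) => fy fx g H s.
by rewrite (_ : - _ - _ = fy - fx - dotv g s - 2^-1 * dotv s (H *m s)) //; ring.
Qed.

Lemma enorm_newton_residual p x (y : 'I_p -> 'cV[R]_n) : hessian f x \in unitmx ->
  enorm (\col_l (dotv (hessian f x *m (y l - x)) (- (invmx (hessian f x) *m grad f x))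
                 - (- f (y l) + f x + 2^-1 * dotv (y l - x) (hessian f x *m (y l - x))))
         : 'cV[R]_p)
  <= p%:R * (n%:R ^+ 2 * `|L|) * maxnorm (fun l => enorm (y l - x)) ^+ 3.
Proof.
move=> H_unit; rewrite -mulrA; apply: enorm_le_coord_bound => l; rewrite mxE.
apply: le_trans (newton_step_residual (y l) H_unit) _.
apply: ler_wpM2l => //; apply: lerXn2r; rewrite ?nnegrE ?enorm_ge0 ?bigmax_ge_id //.
exact: (le_bigmax _ (fun l => enorm (y l - x)) l).
Qed.

End LipschitzHessian.

Theorem theorem4 (R : realType) (n p : nat) (L : R) (hpn : (n <= p)%N) :
  exists C : R,
  forall (f : 'cV[R]_n -> R) (x : 'cV[R]_n) (y : 'I_p -> 'cV[R]_n)
         (Lam : R) (dN : 'cV[R]_n),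
    C2 f -> hessian_lipschitz f L ->
    hessian f x \in unitmx ->
    let H := hessian f x in
    let z := fun l => H *m (y l - x) in
    let Dy := maxnorm (fun l => enorm (y l - x)) in
    let Dz := maxnorm (fun l => enorm (z l)) in
    let M : 'M[R]_(p, n) := \matrix_(l, j) ((z l) j 0 / Dz) in
    \rank M = n ->
    (forall v : 'cV[R]_p, enorm (left_inv M *m v) <= Lam * enorm v) ->
    let b := fun l => - f (y l) + f x + 2^-1 * dotv (y l - x) (z l) in
    let res := fun d : 'cV[R]_n => \col_l (dotv (z l) d - b l) in
    (p = n -> forall l, dotv (z l) dN = b l) ->
    ((n < p)%N -> forall d, enorm (res dN) <= enorm (res d)) ->
    enorm (- (invmx H *m grad f x) - dN) <= Lam * (C * (Dy ^+ 3 / Dz)).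
Proof.
exists (p%:R * (n%:R ^+ 2 * `|L|)).
move=> f x y Lam dN [f_diff [grad_diff _]] hessian_lip H_unit H z Dy Dz M rankM
  Lam_bound b res exact_sol lsq_sol.
have [Dz0 | Dz_neq0] := eqVneq Dz 0.
  (* Then M = 0, so n = 0; the right-hand side vanishes too, as Dz^-1 = 0. *)
  have : \rank M = 0%N.
    rewrite (_ : M = 0) ?mxrank0 //.
    by apply/matrixP => l j; rewrite !mxE Dz0 invr0 mulr0.
  rewrite rankM => n0; rewrite Dz0 invr0 !mulr0.
  by rewrite /enorm big1 ?sqrtr0 // => -[i i_lt] _; exfalso; rewrite n0 in i_lt.
pose Z : 'M[R]_(p, n) := \matrix_(l, j) z l j 0.
have resE d : res d = Z *m d - \col_l b l.
  apply/matrixP => l k; rewrite (ord1 k) !mxE dotvE.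
  by congr (_ - _); apply: eq_bigr => j _; rewrite /Z mxE.
have dN_lsq : is_lsq_solution Z (\col_l b l) dN.
  move: hpn; rewrite leq_eqVlt => /orP[/eqP n_eq_p | /lsq_sol lsq d]; last first.
    by rewrite -!resE.
  apply/lsq_solution_exact/eqP; rewrite -subr_eq0 -resE.
  by apply/eqP/matrixP => l k; rewrite !mxE exact_sol ?subrr.
have Lam_ge0 : 0 <= Lam.
  case: (pickP (fun _ : 'I_p => true)) => [l _ | no_l].
    exact: operator_bound_ge0 l Lam_bound.
  by move: Dz_neq0; rewrite /Dz /maxnorm big_pred0 ?eqxx.
have ME : M = Dz^-1 *: Z by apply/matrixP => l j; rewrite /Z !mxE mulrC.
rewrite ME in rankM Lam_bound.
have Dz_gt0 : 0 < Dz by rewrite lt_def Dz_neq0 bigmax_ge_id.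
apply: le_trans (lsq_error_le _ Dz_gt0 rankM Lam_bound dN_lsq) _.
rewrite -resE; apply: ler_wpM2l => //; rewrite [X in _ <= X]mulrA.
apply: ler_wpM2r; first by rewrite invr_ge0 ltW.
exact (enorm_newton_residual f_diff grad_diff hessian_lip y H_unit).
Qed.
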